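(* Let $Z=\{P_1,\dots,P_r\}\subset\mathbb{P}^2$ be a finite set of points, let $m>n$ be positive integers and $\alpha=\alpha(I(mZ))-\alpha(I(nZ))$. Let $C$ be an effective divisor of degree $\alpha(I(mZ))$ with $\operatorname{ord}_{P_i}C\ge m$ for all $i$, and let $C=\sum_j a_jC_j$ be its decomposition into distinct irreducible components with multiplicities $a_j\ge1$. Put $\gamma_j=\deg(C_j)$, $m_i^{(j)}=\operatorname{ord}_{P_i}C_j$, $\mathbf{m}^{(j)}=(m_1^{(j)},\dots,m_r^{(j)})$, $n_i^{(j)}=\max\{m_i^{(j)}-(m-n),0\}$, $\mathbf{n}^{(j)}=(n_1^{(j)},\dots,n_r^{(j)})$. Then for each $j$: (i) $\gamma_j=\alpha(I(\mathbf{m}^{(j)}Z))$; (ii) $\alpha(I(\mathbf{m}^{(j)}Z))-\alpha(I(\mathbf{n}^{(j)}Z))\le\alpha$.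
   Context: Work over an algebraically closed field $\mathbb{K}$ of characteristic zero, $R=\mathbb{K}[x_0,x_1,x_2]$. For a point $P\in\mathbb{P}^2$, $I(P)\subset R$ is its homogeneous maximal ideal. For $Z=\{P_1,\dots,P_r\}$ and non-negative integers $\mathbf{m}=(m_1,\dots,m_r)$, $I(\mathbf{m}Z)=I(P_1)^{m_1}\cap\dots\cap I(P_r)^{m_r}$ (with $I(P)^0=R$); $I(mZ)$ is this with all $m_i=m$. For a homogeneous ideal $J$, $\alpha(J)=\min\{n: J_n\neq0\}$ is its initial degree (so $\alpha(R)=0$). $\operatorname{ord}_P$ denotes multiplicity of a divisor at $P$. *)

From HB Require Import structures.
From mathcomp Require Import all_boot all_order all_algebra.
From mathcomp Require Import mpoly.
From Stdlib Require Import ClassicalEpsilon.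
Set Implicit Arguments. Unset Strict Implicit. Unset Printing Implicit Defensive.
Import Order.TTheory GRing.Theory Num.Theory.
Local Open Scope ring_scope.

Section Defs.
Variable K : fieldType.

(* R = K[x0,x1,x2]; a point of P^2 is given by homogeneous coordinates
   v : 'I_3 -> K, v <> 0. *)
Definition pt_nonzero (v : 'I_3 -> K) : Prop := exists i, v i != 0.

Definition same_point (v w : 'I_3 -> K) : Prop := exists c : K, c != 0 /\ v = (fun i => c * w i).

(* a linear form vanishing at P: a generator of the homogeneous maximal ideal I(P) *)
Definition lin_van (P : 'I_3 -> K) (l : {mpoly K[3]}) : Prop :=
  l \is 1.-homog /\ l.@[P] = 0.

(* inIpow P k F  <->  F belongs to I(P)^k (ideal generated by k-fold
   products of elements of I(P); I(P)^0 = R). *)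
Inductive inIpow (P : 'I_3 -> K) : nat -> {mpoly K[3]} -> Prop :=
| Ipow0 F : inIpow P 0 F
| Ipow_zero k : inIpow P k 0
| IpowS k g l : inIpow P k g -> lin_van P l -> inIpow P k.+1 (g * l)
| IpowD k F G : inIpow P k F -> inIpow P k G -> inIpow P k (F + G).

(* membership in I(m Z) = \bigcap_i I(P_i)^(m_i) *)
Definition inImZ r (P : 'I_r -> 'I_3 -> K) (ms : 'I_r -> nat) (F : {mpoly K[3]}) : Prop :=
  forall i, inIpow (P i) (ms i) F.

Definition has_deg r (P : 'I_r -> 'I_3 -> K) (ms : 'I_r -> nat) (d : nat) : Prop :=
  exists F : {mpoly K[3]}, [/\ F != 0, F \is d.-homog & inImZ P ms F].

Definition pbool (Q : Prop) : bool :=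
  if excluded_middle_informative Q then true else false.

Definition has_degb r (P : 'I_r -> 'I_3 -> K) (ms : 'I_r -> nat) : pred nat :=
  fun d => pbool (has_deg P ms d).

(* alpha(I(m Z)) : initial degree (0 by convention if the ideal were zero,
   which never happens) *)
Definition alpha r (P : 'I_r -> 'I_3 -> K) (ms : 'I_r -> nat) : nat :=
  match excluded_middle_informative (exists d, has_degb P ms d) with
  | left h => ex_minn h
  | right _ => 0%N
  end.

(* ord_P F : largest k with F in I(P)^k (for F nonzero homogeneous such a k
   is at most deg F < msize F) *)
Definition ord (P : 'I_3 -> K) (F : {mpoly K[3]}) : nat :=
  \max_(k < (msize F).+1 | pbool (inIpow P k F)) k.

Definition mirreducible (G : {mpoly K[3]}) : Prop :=
  G != 0 /\ ~~ (G \is a GRing.unit) /\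
  forall A B : {mpoly K[3]}, G = A * B -> (A \is a GRing.unit) || (B \is a GRing.unit).

Definition massoc (G H : {mpoly K[3]}) : Prop := exists c : K, c != 0 /\ G = c *: H.

End Defs.

(* ord_P is additive on nonzero homogeneous forms: after a linear change of
   coordinates moving P to [1:0:0], ord_P F is the degree of the leading
   monomial of F minus its exponent of x0, and leading monomials multiply.
   Write C = C_j * R.  If D lies in I(m^(j) Z), resp. I(n^(j) Z), additivity
   puts D * R in I(mZ), resp. I(nZ), hence alpha(I(mZ)) <= deg D + deg R,
   resp. alpha(I(nZ)) <= deg D + deg R.  As deg C_j + deg R = deg C =
   alpha(I(mZ)) and C_j itself lies in I(m^(j) Z), this gives (i) and (ii). *)

From HB Require Import structures.
From mathcomp Require Import all_boot all_order all_algebra perm.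
From mathcomp Require Import mpoly zify.
From Stdlib Require Import ClassicalEpsilon.
Import Order.TTheory GRing.Theory Num.Theory.
Local Open Scope ring_scope.
Set Implicit Arguments. Unset Strict Implicit.

Section IdealPower.
Variables (K : fieldType) (P : 'I_3 -> K).
Implicit Types F G l : {mpoly K[3]}.

Lemma inIpow_mull k F G : inIpow P k F -> inIpow P k (G * F).
Proof.
elim=> [F'|j|j F' l _ IH hl|j F1 F2 _ IH1 _ IH2].
- exact: Ipow0.
- by rewrite mulr0; apply: Ipow_zero.
- by rewrite mulrA; apply: IpowS.
- by rewrite mulrDr; apply: IpowD.
Qed.

Lemma inIpow_mulr k F G : inIpow P k F -> inIpow P k (F * G).
Proof. by rewrite mulrC; apply: inIpow_mull. Qed.

Lemma inIpowZ k c F : inIpow P k F -> inIpow P k (c *: F).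
Proof. by rewrite -mul_mpolyC; apply: inIpow_mull. Qed.

Lemma inIpowM a b F G : inIpow P a F -> inIpow P b G -> inIpow P (a + b) (F * G).
Proof.
move=> hF; elim=> [G'|j|j G' l _ IH hl|j G1 G2 _ IH1 _ IH2].
- by rewrite addn0; apply: inIpow_mulr.
- by rewrite mulr0; apply: Ipow_zero.
- by rewrite mulrA addnS; apply: IpowS.
- by rewrite mulrDr; apply: IpowD.
Qed.

Lemma inIpow_le k k' F : (k <= k')%N -> inIpow P k' F -> inIpow P k F.
Proof.
move=> le_kk' h; elim: h k le_kk' => {k' F} [F|k'|k' G l _ IH hl|k' F1 F2 _ IH1 _ IH2] k.
- by rewrite leqn0 => /eqP ->; apply: Ipow0.
- by move=> _; apply: Ipow_zero.
- case: k => [_|k]; first exact: Ipow0.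
  by move=> /IH hG; apply: IpowS hG hl.
- by move=> le_k; apply: IpowD; [apply: IH1 | apply: IH2].
Qed.

Lemma inIpowX e l : lin_van P l -> inIpow P e (l ^+ e).
Proof.
move=> hl; elim: e => [|e IH]; first exact: Ipow0.
by rewrite exprSr; apply: IpowS.
Qed.

Lemma inIpow_sum (I : Type) (s : seq I) k (F : I -> {mpoly K[3]}) :
  (forall i, inIpow P k (F i)) -> inIpow P k (\sum_(i <- s) F i).
Proof.
move=> hF; elim/big_rec: _ => [|i G _ hG]; first exact: Ipow_zero.
exact: IpowD.
Qed.

Lemma inIpow_prod (I : Type) (s : seq I) (Q : pred I) (e : I -> nat)
    (F : I -> {mpoly K[3]}) :
  (forall i, Q i -> inIpow P (e i) (F i)) ->
  inIpow P (\sum_(i <- s | Q i) e i) (\prod_(i <- s | Q i) F i).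
Proof.
move=> hF; elim/big_rec2: _ => [|i d G Qi hG]; first exact: Ipow0.
exact: inIpowM (hF i Qi) hG.
Qed.

End IdealPower.

Section OrderAtE0.
Variable K : fieldType.
Implicit Types (F G : {mpoly K[3]}) (mm : 'X_{1..3}).

Definition e0 : 'I_3 -> K := fun i => (i == ord0)%:R.

Definition mcodeg0 mm := (mdeg mm - mm ord0)%N.

(* Monomial description of F \in I([1:0:0])^k = (x1, x2)^k. *)
Definition ord_e0_ge k F := {in msupp F, forall mm, (k <= mcodeg0 mm)%N}.

Definition ord_e0 F := mcodeg0 (mlead F).

Lemma mnm0_le_mdeg mm : (mm ord0 <= mdeg mm)%N.
Proof. by rewrite mdegE (bigD1 ord0) //= leq_addr. Qed.

Lemma mcodeg0D m1 m2 : mcodeg0 (m1 + m2) = (mcodeg0 m1 + mcodeg0 m2)%N.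
Proof.
rewrite /mcodeg0 mdegD mnmDE.
by have := mnm0_le_mdeg m1; have := mnm0_le_mdeg m2; lia.
Qed.

(* Degree-lexicographic order compares the exponent of x0 first. *)
Lemma le_mcodeg0 mm L :
  (mm <= L)%O -> mdeg mm = mdeg L -> (mcodeg0 L <= mcodeg0 mm)%N.
Proof.
rewrite /mcodeg0 le_eqVlt => /orP [/eqP -> //|lt_mmL] eq_deg.
rewrite eq_deg leq_sub2l //.
case/(ltmcP eq_deg): lt_mmL => i eq_below lt_i.
case: (posnP i) => [i_eq0|i_gt0]; last by rewrite eq_below.
have -> : ord0 = i by apply: val_inj; rewrite /= i_eq0.
exact: ltnW.
Qed.

Lemma ord_e0_ge0 F : ord_e0_ge 0 F.
Proof. by []. Qed.

Lemma ord_e0_ge_zero k : ord_e0_ge k (0 : {mpoly K[3]}).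
Proof. by move=> mm; rewrite msupp0. Qed.

Lemma ord_e0_geD k F G : ord_e0_ge k F -> ord_e0_ge k G -> ord_e0_ge k (F + G).
Proof. by move=> hF hG mm /msuppD_le; rewrite mem_cat => /orP [/hF|/hG]. Qed.

Lemma ord_e0_geM a b F G :
  ord_e0_ge a F -> ord_e0_ge b G -> ord_e0_ge (a + b) (F * G).
Proof.
move=> hF hG mm /msuppM_le /allpairsP [[m1 m2] [/= /hF h1 /hG h2 ->]].
by rewrite mcodeg0D leq_add.
Qed.

Lemma ord_e0_geP d k F :
  F != 0 -> F \is d.-homog -> ord_e0_ge k F <-> (k <= ord_e0 F)%N.
Proof.
move=> nzF hF; split=> [|le_k mm mm_supp]; first by apply; exact: mlead_supp.
apply: leq_trans le_k _; apply: le_mcodeg0 (msupp_le_mlead mm_supp) _.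
by rewrite (dhomog_mf hF mm_supp) (dhomog_mf hF (mlead_supp nzF)).
Qed.

Lemma ord_e0M F G : F != 0 -> G != 0 -> ord_e0 (F * G) = (ord_e0 F + ord_e0 G)%N.
Proof. by move=> nzF nzG; rewrite /ord_e0 mleadM // mcodeg0D. Qed.

Lemma ord_e0_le d F : F != 0 -> F \is d.-homog -> (ord_e0 F <= d)%N.
Proof.
by move=> nzF hF; rewrite /ord_e0 /mcodeg0 -(dhomog_mf hF (mlead_supp nzF)) leq_subr.
Qed.

Lemma mcoeff_U0 G : G \is 1.-homog -> G@_(U_(ord0))%MM = G.@[e0].
Proof.
move=> hG; rewrite {1}(mpolyE G) mevalE raddf_sum /= !big_seq.
apply: eq_bigr => mm mm_supp; rewrite mcoeffZ mcoeffX; congr (_ * _).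
have /mdeg1P [k /eqP ->] : mdeg mm == 1%N by rewrite (dhomog_mf hG mm_supp).
rewrite (bigD1 k) //= mnm1E eqxx expr1 big1 ?mulr1; last first.
  by move=> i ne_ik; rewrite mnm1E eq_sym (negbTE ne_ik) expr0.
rewrite /e0; case: (eqVneq k ord0) => [->|ne_k0]; first by rewrite eqxx.
case: eqP => // /(congr1 (fun mm : 'X_{1..3} => mm k)).
by rewrite !mnm1E eqxx eq_sym (negbTE ne_k0).
Qed.

Lemma lin_van_ord_e0 l : lin_van e0 l -> ord_e0_ge 1 l.
Proof.
case=> hl l_e0 mm mm_supp.
have /mdeg1P [k /eqP mmE] : mdeg mm == 1%N by rewrite (dhomog_mf hl mm_supp).
case: (eqVneq k ord0) => [k0|ne_k0].
  by move: mm_supp; rewrite mcoeff_msupp mmE k0 mcoeff_U0 // l_e0 eqxx.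
by rewrite /mcodeg0 mmE mdeg1 mnm1E (negbTE ne_k0).
Qed.

End OrderAtE0.

Section Substitution.
Variable K : fieldType.

Lemma rmorph_comp_mpoly (S : comRingType) (f g : {rmorphism {mpoly K[3]} -> S})
    (lq : 3.-tuple {mpoly K[3]}) :
  (forall c, f c%:MP = g c%:MP) -> (forall i, f (tnth lq i) = g 'X_i) ->
  forall F, f (F \mPo lq) = g F.
Proof.
move=> fgC fgX F; rewrite {2}(mpolyE F) comp_mpolyEX !rmorph_sum.
apply: eq_bigr => mm _; rewrite -!mul_mpolyC !rmorphM fgC; congr (_ * _).
rewrite comp_mpolyX mpolyXE_id !rmorph_prod; apply: eq_bigr => i _.
by rewrite !rmorphXn fgX.
Qed.

Lemma comp_mpoly_dhomog (lq : 3.-tuple {mpoly K[3]}) d F :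
  (forall i, tnth lq i \is 1.-homog) -> F \is d.-homog -> F \mPo lq \is d.-homog.
Proof.
move=> lq_lin hF; rewrite comp_mpolyE big_seq; apply: rpred_sum => mm mm_supp.
apply: rpredZ; have -> : d = mdeg mm by rewrite (dhomog_mf hF mm_supp).
rewrite mdegE.
elim/big_rec2: _ => [|i e G _ hG]; first exact: dhomog1.
by apply: dhomogM hG; have := dhomogMn (mm i) (lq_lin i); rewrite mul1n.
Qed.

Lemma dhomogXU (i : 'I_3) : ('X_i : {mpoly K[3]}) \is 1.-homog.
Proof. by rewrite dhomogX; apply/eqP; exact: mdeg1. Qed.

End Substitution.

Lemma pboolP (Q : Prop) : pbool Q = true <-> Q.
Proof. by rewrite /pbool; case: excluded_middle_informative. Qed.

Lemma msize_dhomog (K : fieldType) d (F : {mpoly K[3]}) :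
  F != 0 -> F \is d.-homog -> msize F = d.+1.
Proof. by move=> nzF hF; rewrite -mlead_deg // (dhomog_mf hF (mlead_supp nzF)). Qed.

Section Chart.
Variables (K : fieldType) (P : 'I_3 -> K).
Hypothesis hP : pt_nonzero P.
Implicit Types F G l : {mpoly K[3]}.

Let i0 := xchoose hP.
Let Pi0_neq0 : P i0 != 0 := xchooseP hP.
Let tau := tperm ord0 i0.

Let tau_eq0 j : (tau j == ord0) = (j == i0).
Proof. by rewrite -{1}(tpermR ord0 i0) (inj_eq perm_inj). Qed.

(* The linear change of coordinates sending [1:0:0] to P, and its inverse. *)
Definition chart_tuple : 3.-tuple {mpoly K[3]} :=
  [tuple P j *: 'X_ord0 + (if j == i0 then 0 else 'X_(tau j)) | j < 3].

Definition unchart_tuple : 3.-tuple {mpoly K[3]} :=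
  [tuple if k == ord0 then (P i0)^-1 *: 'X_i0
         else 'X_(tau k) - (P (tau k) / P i0) *: 'X_i0 | k < 3].

Definition chart F := F \mPo chart_tuple.

Let tnth_chart j :
  tnth chart_tuple j = P j *: 'X_ord0 + (if j == i0 then 0 else 'X_(tau j)).
Proof. by rewrite tnth_map tnth_ord_tuple. Qed.

Let tnth_unchart k : tnth unchart_tuple k =
  if k == ord0 then (P i0)^-1 *: 'X_i0 else 'X_(tau k) - (P (tau k) / P i0) *: 'X_i0.
Proof. by rewrite tnth_map tnth_ord_tuple. Qed.

Lemma chartK F : chart F \mPo unchart_tuple = F.
Proof.
rewrite /chart; apply: (@rmorph_comp_mpoly _ _ (comp_mpoly unchart_tuple) idfun) => [c|i].
  exact: comp_mpolyC.
rewrite tnth_chart /= comp_mpolyD comp_mpolyZ !comp_mpolyXU -!tnth_nth tnth_unchart eqxx.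
have [->|ne_i] := eqVneq i i0.
  by rewrite comp_mpoly0 addr0 scalerA mulfV // scale1r.
rewrite comp_mpolyXU -tnth_nth tnth_unchart tau_eq0 (negbTE ne_i) tpermK.
by rewrite scalerA addrC -addrA mulrC addNr addr0.
Qed.

Lemma chart_eq0 F : (chart F == 0) = (F == 0).
Proof.
apply/eqP/eqP => [F0|->]; last exact: comp_mpoly0.
by rewrite -(chartK F) F0 comp_mpoly0.
Qed.

Lemma chart_dhomog d F : F \is d.-homog -> chart F \is d.-homog.
Proof.
apply: comp_mpoly_dhomog => j; rewrite tnth_chart; apply: rpredD.
  exact/rpredZ/dhomogXU.
by case: ifP => _; [exact: rpred0 | exact: dhomogXU].
Qed.

Lemma meval_chart F : (chart F).@[e0 K] = F.@[P].
Proof.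
rewrite comp_mpoly_meval; apply: meval_eq => j.
rewrite tnth_chart mevalD mevalZ mevalXU /e0 eqxx mulr1.
case: ifP => [_|ne_j]; first by rewrite meval0 addr0.
by rewrite mevalXU tau_eq0 ne_j addr0.
Qed.

Lemma inIpow_chart k F : inIpow P k F -> ord_e0_ge k (chart F).
Proof.
elim=> [G|j|j G l _ IH [hl l_P]|j F1 F2 _ IH1 _ IH2].
- exact: ord_e0_ge0.
- by rewrite /chart comp_mpoly0; apply: ord_e0_ge_zero.
- rewrite /chart rmorphM -addn1; apply: ord_e0_geM IH _.
  by apply: lin_van_ord_e0; split; [exact: chart_dhomog | rewrite meval_chart].
- by rewrite /chart comp_mpolyD; apply: ord_e0_geD.
Qed.

Lemma unchart_van i : i != ord0 -> lin_van P (tnth unchart_tuple i).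
Proof.
move=> ne_i0; split; rewrite tnth_unchart (negbTE ne_i0).
  by apply: rpredB; [exact: dhomogXU | exact/rpredZ/dhomogXU].
by rewrite mevalB mevalZ !mevalXU mulfVK // subrr.
Qed.

Lemma chart_inIpow k F : ord_e0_ge k (chart F) -> inIpow P k F.
Proof.
(* Substituting back, a monomial mm of [chart F] becomes a product of
   [mcodeg0 mm] linear forms vanishing at P. *)
move=> hk; rewrite -(chartK F) comp_mpolyE big_seq big_mkcond /=.
apply: inIpow_sum => mm; case: ifP => [mm_supp|_]; last exact: Ipow_zero.
apply/inIpowZ/(inIpow_le (hk mm mm_supp)).
rewrite (bigD1 ord0) //=; apply: inIpow_mull.
have -> : mcodeg0 mm = (\sum_(i < 3 | i != ord0) mm i)%N.
  by rewrite /mcodeg0 mdegE (bigD1 ord0) //= addKn.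
by apply: inIpow_prod => i ne_i0; apply/inIpowX/unchart_van.
Qed.

Lemma inIpow_ord_e0 d k F :
  F != 0 -> F \is d.-homog -> inIpow P k F <-> (k <= ord_e0 (chart F))%N.
Proof.
move=> nzF hF; rewrite -(ord_e0_geP k _ (chart_dhomog hF)) ?chart_eq0 //.
by split; [exact: inIpow_chart | exact: chart_inIpow].
Qed.

Lemma ord_chart d F : F != 0 -> F \is d.-homog -> ord P F = ord_e0 (chart F).
Proof.
move=> nzF hF; have nz_chart : chart F != 0 by rewrite chart_eq0.
have le_d := ord_e0_le nz_chart (chart_dhomog hF).
rewrite /ord (msize_dhomog nzF hF); apply/eqP; rewrite eqn_leq; apply/andP; split.
  by apply/bigmax_leqP => k /pboolP /(inIpow_ord_e0 _ nzF hF).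
have lt_d1 : (ord_e0 (chart F) < d.+2)%N by rewrite ltnS (leq_trans le_d).
apply: (@leq_bigmax_cond _ _ _ (Ordinal lt_d1)); apply/pboolP.
exact/(inIpow_ord_e0 _ nzF hF).
Qed.

Lemma inIpow_ord d k F :
  F != 0 -> F \is d.-homog -> inIpow P k F <-> (k <= ord P F)%N.
Proof. by move=> nzF hF; rewrite (ord_chart nzF hF); apply: inIpow_ord_e0 hF. Qed.

Lemma ordM d e F G : F != 0 -> G != 0 -> F \is d.-homog -> G \is e.-homog ->
  ord P (F * G) = (ord P F + ord P G)%N.
Proof.
move=> nzF nzG hF hG; rewrite (ord_chart (mulf_neq0 nzF nzG) (dhomogM hF hG)).
by rewrite (ord_chart nzF hF) (ord_chart nzG hG) /chart rmorphM ord_e0M ?chart_eq0.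
Qed.

End Chart.

Section InitialDegree.
Variables (K : fieldType) (r : nat) (P : 'I_r -> 'I_3 -> K).

Lemma alpha_spec ms d :
  has_deg P ms d -> has_deg P ms (alpha P ms) /\ (alpha P ms <= d)%N.
Proof.
move=> hd; rewrite /alpha; case: excluded_middle_informative => [ex|[]]; last first.
  by exists d; apply/pboolP.
case: ex_minnP => a /pboolP ha a_min; split=> //.
by apply/a_min/pboolP.
Qed.

Lemma alpha_le ms d : has_deg P ms d -> (alpha P ms <= d)%N.
Proof. by case/alpha_spec. Qed.

Lemma has_deg_alpha ms d : has_deg P ms d -> has_deg P ms (alpha P ms).
Proof. by case/alpha_spec. Qed.

End InitialDegree.

Section MinimalCurveFactor.
Variables (K : fieldType) (r : nat) (P : 'I_r -> 'I_3 -> K).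
Hypothesis hP : forall i, pt_nonzero (P i).
Variables (m : nat) (G R : {mpoly K[3]}) (g e : nat).
Hypotheses (nzG : G != 0) (nzR : R != 0) (hG : G \is g.-homog) (hR : R \is e.-homog).
Hypothesis hGR_deg : G * R \is (alpha P (fun _ => m)).-homog.
Hypothesis hGR_ord : forall i, inIpow (P i) m (G * R).

Local Notation mG := (fun i => ord (P i) G).

Let alpha_m : (g + e)%N = alpha P (fun _ => m).
Proof. exact: dhomog_uniq (mulf_neq0 nzG nzR) (dhomogM hG hR) hGR_deg. Qed.

Let ord_GR i : (m <= ord (P i) G + ord (P i) R)%N.
Proof.
rewrite -(ordM (hP i) nzG nzR hG hR).
exact/(inIpow_ord (hP i) _ (mulf_neq0 nzG nzR) (dhomogM hG hR)).
Qed.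

Let has_deg_mulr ms D d : D != 0 -> D \is d.-homog ->
  (forall i, ms i <= ord (P i) D + ord (P i) R)%N -> has_deg P ms (d + e).
Proof.
move=> nzD hD le_ms; exists (D * R); split; [exact: mulf_neq0 | exact: dhomogM |].
move=> i; apply/(inIpow_ord (hP i) _ (mulf_neq0 nzD nzR) (dhomogM hD hR)).
by rewrite (ordM (hP i) nzD nzR hD hR).
Qed.

Let has_deg_factor ms : (forall i, ms i <= mG i)%N -> has_deg P ms g.
Proof.
move=> le_ms; exists G; split=> // i.
exact/(inIpow_ord (hP i) _ nzG hG).
Qed.

Let inImZ_ord ms D d : D != 0 -> D \is d.-homog -> inImZ P ms D ->
  forall i, (ms i <= ord (P i) D)%N.
Proof. by move=> nzD hD hDms i; apply/(inIpow_ord (hP i) _ nzD hD). Qed.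

Lemma alpha_factor : alpha P mG = g.
Proof.
have hg := has_deg_factor (fun i => leqnn _).
have [D [nzD hD hDm]] := has_deg_alpha hg.
have le_mG_ordD := inImZ_ord nzD hD hDm.
have : has_deg P (fun _ => m) (alpha P mG + e).
  by apply: has_deg_mulr nzD hD _ => i; rewrite (leq_trans (ord_GR i)) // leq_add2r le_mG_ordD.
move/alpha_le; rewrite -alpha_m leq_add2r => le_g.
by apply/eqP; rewrite eqn_leq le_g (alpha_le hg).
Qed.

Lemma alpha_factor_sub n : (n <= m)%N ->
  (alpha P mG)%:Z - (alpha P (fun i => mG i - (m - n))%N)%:Z <=
    (alpha P (fun _ => m))%:Z - (alpha P (fun _ => n))%:Z.
Proof.
move=> le_nm.
have [D [nzD hD hDn]] := has_deg_alpha (has_deg_factor (fun i => leq_subr (m - n) _)).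
have le_nG_ordD := inImZ_ord nzD hD hDn.
have : has_deg P (fun _ => n) (alpha P (fun i => mG i - (m - n))%N + e).
  apply: has_deg_mulr nzD hD _ => i; have := le_nG_ordD i; have := ord_GR i.
  by move: (mG i) (ord (P i) D) (ord (P i) R) => x y z /=; lia.
move/alpha_le; rewrite alpha_factor -alpha_m; lia.
Qed.

End MinimalCurveFactor.

Lemma homog_bigprod (K : fieldType) (I : Type) (s : seq I) (Q : pred I)
    (F : I -> {mpoly K[3]}) :
  (forall i, Q i -> F i \is homog mdeg) -> \prod_(i <- s | Q i) F i \is homog mdeg.
Proof.
move=> hF; apply/homogP; elim/big_rec: _ => [|i G Qi [d hG]].
  by exists 0%N; exact: dhomog1.
by have /homogP [d' hFi] := hF i Qi; exists (d' + d)%N; exact: dhomogM.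
Qed.

Theorem corollary2p2
  (K : closedFieldType) (charK0 : [pchar K] =i pred0)
  (r : nat) (P : 'I_r -> 'I_3 -> K)
  (hP : forall i, pt_nonzero (P i))
  (hdist : forall i j, i != j -> ~ same_point (P i) (P j))
  (m n : nat) (hn : (0 < n)%N) (hmn : (n < m)%N)
  (C : {mpoly K[3]})
  (hC0 : C != 0)
  (hCdeg : C \is (alpha P (fun _ => m)).-homog)
  (hCord : forall i, inIpow (P i) m C)
  (s : nat) (c : K) (Cs : 'I_s -> {mpoly K[3]}) (a : 'I_s -> nat)
  (hc : c != 0)
  (hdec : C = c *: \prod_(j < s) Cs j ^+ a j)
  (hirr : forall j, mirreducible (Cs j))
  (hhom : forall j, Cs j \is (msize (Cs j)).-1.-homog)
  (hdistinct : forall j k, j != k -> ~ massoc (Cs j) (Cs k))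
  (ha : forall j, (0 < a j)%N) :
  forall j : 'I_s,
    let gamma := (msize (Cs j)).-1 in
    let mj := fun i => ord (P i) (Cs j) in
    let nj := fun i => (mj i - (m - n))%N in
    gamma = alpha P mj /\
    ((alpha P mj)%:Z - (alpha P nj)%:Z <=
       (alpha P (fun _ => m))%:Z - (alpha P (fun _ => n))%:Z).
Proof.
move=> j gamma mj nj.
pose R := c *: (Cs j ^+ (a j).-1 * \prod_(k < s | k != j) Cs k ^+ a k).
have eC : C = Cs j * R by rewrite hdec (bigD1 j) //= -scalerAr mulrA -exprS prednK.
have nzCj : Cs j != 0 by case: (hirr j).
have nzR : R != 0 by apply: contraNneq hC0 => R0; rewrite eC R0 mulr0.
have /homogP [e hR] : R \is homog mdeg.
  have /homogP [e hrest] := @homog_bigprod K _ (index_enum 'I_s) (fun k => k != j)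
    (fun k => Cs k ^+ a k) (fun k _ => homogE (dhomogMn (a k) (hhom k))).
  apply/homogP.
  by exists (gamma * (a j).-1 + e)%N; apply/dhomogZ/dhomogM/hrest/dhomogMn/hhom.
rewrite eC in hCdeg hCord.
split; first by rewrite (alpha_factor hP nzCj nzR (hhom j) hR hCdeg hCord).
exact: (alpha_factor_sub hP nzCj nzR (hhom j) hR hCdeg hCord (ltnW hmn)).
Qed.
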